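(* Let $S$ be the standard form on $\mathbb{R}^{2m}$. A closed set $G\subset\mathbb{R}^{2m}$ is a linear subspace of $\mathbb{R}^{2m}$ belonging to $\mathcal{M}(S)$ and strictly $S$-monotone if and only if $G=\operatorname{graph}f$, where $f(u)=Au$, $u\in\mathbb{R}^m$, for some positive-definite $m\times m$ matrix $A$.
   Context: Standard form on $\mathbb{R}^{2m}$: $S((r,s),(u,v)):=\langle s,u\rangle+\langle r,v\rangle$, $r,s,u,v\in\mathbb{R}^m$. $G$ is $S$-monotone if $S(x-y,x-y)\ge0$ for $x,y\in G$; strictly $S$-monotone if $S(x-y,x-y)>0$ for all $x\ne y$ in $G$; maximal $S$-monotone if not a strict subset of another $S$-monotone set; $\mathcal{M}(S)$ = family of maximal $S$-monotone sets. An $m\times m$ real matrix $A$ (possibly non-symmetric) is positive-definite if $\langle r,Ar\rangle>0$ for all $r\ne0$. *)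

(* R^m is represented by column vectors 'cV[R]_m,
   R^{2m} = R^m x R^m by pairs (r, s). *)
From HB Require Import structures.
From mathcomp Require Import all_boot all_order all_algebra.
From mathcomp Require Import all_classical all_reals all_analysis.
Set Implicit Arguments. Unset Strict Implicit. Unset Printing Implicit Defensive.
Import Order.TTheory GRing.Theory Num.Theory.
Import numFieldNormedType.Exports.
Local Open Scope ring_scope.
Local Open Scope classical_set_scope.

Definition dotv (R : realType) (m : nat) (r s : 'cV[R]_m) : R :=
  \sum_(i < m) r i 0 * s i 0.

Definition stdS (R : realType) (m : nat) (x y : 'cV[R]_m * 'cV[R]_m) : R :=
  dotv x.2 y.1 + dotv x.1 y.2.

Definition S_monotone (R : realType) (m : nat) (G : set ('cV[R]_m * 'cV[R]_m)) : Prop :=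
  forall x y, G x -> G y -> 0 <= stdS (x - y) (x - y).

Definition strictly_S_monotone (R : realType) (m : nat)
    (G : set ('cV[R]_m * 'cV[R]_m)) : Prop :=
  forall x y, G x -> G y -> x <> y -> 0 < stdS (x - y) (x - y).

(* G belongs to M(S): S-monotone and not a strict subset of another S-monotone set *)
Definition maximal_S_monotone (R : realType) (m : nat)
    (G : set ('cV[R]_m * 'cV[R]_m)) : Prop :=
  S_monotone G /\
  forall H : set ('cV[R]_m * 'cV[R]_m), S_monotone H -> G `<=` H -> H = G.

Definition linear_subspace (R : realType) (m : nat)
    (G : set ('cV[R]_m * 'cV[R]_m)) : Prop :=
  G 0 /\ (forall x y, G x -> G y -> G (x + y)) /\
  (forall (a : R) x, G x -> G (a *: x)).

Definition posdef (R : realType) (m : nat) (A : 'M[R]_m) : Prop :=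
  forall r : 'cV[R]_m, r != 0 -> 0 < dotv r (A *m r).

Definition graph_of (R : realType) (m : nat) (f : 'cV[R]_m -> 'cV[R]_m)
    : set ('cV[R]_m * 'cV[R]_m) :=
  [set x | x.2 = f x.1].

From mathcomp Require Import all_boot all_order all_algebra.
From mathcomp Require Import all_classical all_reals all_analysis.
From mathcomp Require Import lra zify.
Set Implicit Arguments. Unset Strict Implicit. Unset Printing Implicit Defensive.
Import Order.TTheory GRing.Theory Num.Theory.
Import numFieldNormedType.Exports.
Local Open Scope ring_scope.
Local Open Scope classical_set_scope.

(* Since S((r,s),(r,s)) = 2<r,s>, the graph of u |-> Au is strictly
   S-monotone exactly when A is positive-definite.  It is maximal: if (u,v) is
   S-monotonically related to every point of the graph, then e := v - Au
   satisfies |e|^2 <= t <e,Ae> for all t > 0, so e = 0.  Conversely, let G be a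
   maximal and strictly S-monotone subspace.  Strict monotonicity forces
   (0,s) in G to have s = 0, and maximality forces the domain of G to be all
   of R^m: a vector w orthogonal to that domain can be adjoined as (0,w)
   without breaking monotonicity, hence (0,w) is in G and w = 0.  A subspace
   of R^m x R^m with full domain and trivial fibre over 0 is the graph of a
   matrix. *)

(* [linear_subspace G] is, definitionally, [subspace G] in R^m x R^m. *)
Section Subspace.
Variables (R : pzRingType) (V : lmodType R).
Implicit Types D : set V.

Definition subspace D : Prop :=
  D 0 /\ (forall x y, D x -> D y -> D (x + y)) /\
  (forall (a : R) x, D x -> D (a *: x)).

Lemma subspaceB D x y : subspace D -> D x -> D y -> D (x - y).
Proof. by move=> [_ [DD DZ]] Dx Dy; rewrite -scaleN1r; apply/DD/DZ. Qed.

Lemma subspace_sum D (I : Type) (r : seq I) (P : pred I) (F : I -> V) :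
  subspace D -> (forall i, P i -> D (F i)) -> D (\sum_(i <- r | P i) F i).
Proof. by move=> [D0 [DD _]] DF; apply: big_ind. Qed.

End Subspace.

Lemma ler0_of_le_pmul (R : realFieldType) (a b : R) :
  (forall t, 0 < t -> a <= t * b) -> a <= 0.
Proof.
move=> le_ab; apply/ler_addgt0Pr => e e_gt0; rewrite add0r.
have nb_gt0 : 0 < `|b| + 1 by rewrite ltr_pwDr ?normr_ge0.
set t := e / (`|b| + 1).
have t_gt0 : 0 < t by rewrite divr_gt0.
have te : t * (`|b| + 1) = e by rewrite mulfVK ?gt_eqF.
have := le_ab t t_gt0; have := ler_norm b; nra.
Qed.

Section MatrixColumns.
Variables (R : comPzRingType) (m n : nat).

Lemma col_sum_delta (r : 'cV[R]_m) : r = \sum_j r j 0 *: delta_mx j 0.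
Proof.
apply/matrixP => i k; rewrite (ord1 k) summxE (bigD1 i) //= big1.
  by rewrite !mxE !eqxx mulr1 addr0.
by move=> j /negbTE ne; rewrite !mxE eq_sym ne mulr0.
Qed.

Lemma mulmx_sum_col (A : 'M[R]_(n, m)) (r : 'cV[R]_m) :
  A *m r = \sum_j r j 0 *: col j A.
Proof.
apply/matrixP => i k; rewrite (ord1 k) !mxE summxE.
by apply: eq_bigr => j _; rewrite !mxE mulrC.
Qed.

End MatrixColumns.

Lemma exists_row_span (F : fieldType) (m : nat) (D : set 'cV[F]_m) :
  exists k (M : 'M[F]_(k, m)),
    (forall i, D (row i M)^T) /\ (forall d, D d -> (d^T <= M)%MS).
Proof.
suff: forall n k (M : 'M[F]_(k, m)), (m - \rank M < n)%N ->
    (forall i, D (row i M)^T) ->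
    exists k (M : 'M[F]_(k, m)),
      (forall i, D (row i M)^T) /\ (forall d, D d -> (d^T <= M)%MS).
  by move=> ext; apply: (ext m.+1 0%N 0) => [|[]//]; rewrite mxrank0 subn0.
elim=> // n IHn k M rkM DM.
have [spanM|] := pselect (forall d, D d -> (d^T <= M)%MS); first by exists k, M.
move=> /existsNP[d /not_implyP[Dd /negP dNM]].
apply: (IHn _ (col_mx M d^T)).
  have ltM : (M < col_mx M d^T)%MS.
    by rewrite ltmxE -addsmxE addsmxSl col_mx_sub (negbTE dNM) andbF.
  have := rank_ltmx ltM; have := rank_leq_col (col_mx M d^T); lia.
move=> i; rewrite -(splitK i); case: (fintype.split i) => j /=.
  by rewrite rowKu.
by rewrite rowKd row_id trmxK.
Qed.

Section DotProduct.
Variables (R : realType) (m : nat).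
Implicit Types r s u : 'cV[R]_m.

Lemma dotvE r s : dotv r s = (r^T *m s) 0 0.
Proof. by rewrite /dotv !mxE; apply: eq_bigr => i _; rewrite mxE. Qed.

Lemma dotvC r s : dotv r s = dotv s r.
Proof. by rewrite /dotv; apply: eq_bigr => i _; rewrite mulrC. Qed.

Lemma dotvDl r s u : dotv (r + s) u = dotv r u + dotv s u.
Proof.
by rewrite /dotv -big_split; apply: eq_bigr => i _; rewrite mxE mulrDl.
Qed.

Lemma dotvZl (a : R) r s : dotv (a *: r) s = a * dotv r s.
Proof. by rewrite /dotv mulr_sumr; apply: eq_bigr => i _; rewrite mxE mulrA. Qed.

Lemma dotvNl r s : dotv (- r) s = - dotv r s.
Proof. by rewrite -scaleN1r dotvZl mulN1r. Qed.

Lemma dotvBl r s u : dotv (r - s) u = dotv r u - dotv s u.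
Proof. by rewrite dotvDl dotvNl. Qed.

Lemma dotvZr (a : R) r s : dotv r (a *: s) = a * dotv r s.
Proof. by rewrite dotvC dotvZl dotvC. Qed.

Lemma dotvBr r s u : dotv r (s - u) = dotv r s - dotv r u.
Proof. by rewrite !(dotvC r) dotvBl. Qed.

Lemma dotvNr r s : dotv r (- s) = - dotv r s.
Proof. by rewrite !(dotvC r) dotvNl. Qed.

Lemma dotv0l r : dotv 0 r = 0.
Proof. by rewrite /dotv big1 // => i _; rewrite mxE mul0r. Qed.

Lemma dotv_ge0 r : 0 <= dotv r r.
Proof. by rewrite /dotv sumr_ge0 // => i _; rewrite -expr2 sqr_ge0. Qed.

Lemma dotv_eq0 r : (dotv r r == 0) = (r == 0).
Proof.
apply/idP/eqP => [|->]; last by rewrite dotv0l.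
rewrite /dotv psumr_eq0 => [/allP r0|i _]; last by rewrite -expr2 sqr_ge0.
apply/matrixP => i j; rewrite (ord1 j) mxE.
by have := r0 i (mem_index_enum _); rewrite /= mulf_eq0 orbb => /eqP.
Qed.

End DotProduct.

Lemma stdS_diag (R : realType) (m : nat) (x : 'cV[R]_m * 'cV[R]_m) :
  stdS x x = dotv x.1 x.2 *+ 2.
Proof. by rewrite /stdS dotvC mulr2n. Qed.

Lemma stdSN (R : realType) (m : nat) (x : 'cV[R]_m * 'cV[R]_m) :
  stdS (- x) (- x) = stdS x x.
Proof. by rewrite /stdS /= !dotvNl !dotvNr !opprK. Qed.

Lemma strictly_S_monotoneW (R : realType) (m : nat)
    (G : set ('cV[R]_m * 'cV[R]_m)) :
  strictly_S_monotone G -> S_monotone G.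
Proof.
move=> strG x y Gx Gy; have [->|xy] := pselect (x = y).
  by rewrite subrr stdS_diag dotv0l.
exact/ltW/strG.
Qed.

Lemma subspace_orthogonal0_full (R : realType) (m : nat) (D : set 'cV[R]_m) :
  subspace D -> (forall w, (forall r, D r -> dotv r w = 0) -> w = 0) ->
  forall u, D u.
Proof.
move=> subD orth0 u.
have [k [M [DM spanM]]] := exists_row_span D.
have kerMT0 : kermx M^T = 0.
  apply/row_matrixP => i; rewrite row0; apply: trmx_inj; rewrite trmx0.
  have MK : M *m (row i (kermx M^T))^T = 0.
    by rewrite -[M in M *m _]trmxK -trmx_mul -row_mul mulmx_ker row0 trmx0.
  apply: orth0 => r /spanM/submxP[a rM].
  by rewrite dotvE rM -mulmxA MK mulmx0 mxE.
have fullM : row_full M.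
  by have := kermx_eq0 M^T; rewrite kerMT0 eqxx /row_free mxrank_tr => /esym.
have /submxP[a uM] := submx_full u^T fullM.
rewrite -[u]trmxK uM mulmx_sum_row linear_sum; apply: subspace_sum => // i _.
by rewrite linearZ /=; case: subD => _ [_ DZ]; exact: DZ.
Qed.

Section GraphOfMatrix.
Variables (R : realType) (m : nat) (A : 'M[R]_m).
Notation graphA := (graph_of (fun u => A *m u)).

Lemma graph_mx_subspace : subspace graphA.
Proof.
split; first by rewrite /graph_of /= mulmx0.
split; first by move=> [r s] [r' s']; rewrite /graph_of /= => -> ->;
  rewrite mulmxDr.
by move=> a [r s]; rewrite /graph_of /= => ->; rewrite scalemxAr.
Qed.

Lemma stdS_graph_mxB r r' (x := (r, A *m r) - (r', A *m r')) :
  stdS x x = dotv (r - r') (A *m (r - r')) *+ 2.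
Proof. by rewrite stdS_diag /= mulmxBr. Qed.

Lemma graph_mx_strictly_S_monotone : posdef A -> strictly_S_monotone graphA.
Proof.
move=> posA [r s] [r' s']; rewrite /graph_of /= => -> -> neq.
rewrite stdS_graph_mxB pmulrn_lgt0 //.
by apply: posA; rewrite subr_eq0; apply/eqP => rr'; apply: neq; rewrite rr'.
Qed.

Lemma posdef_graph_mx : strictly_S_monotone graphA -> posdef A.
Proof.
move=> strA r r0; have := strA (r, A *m r) (0, A *m 0) erefl erefl.
rewrite stdS_graph_mxB subr0 pmulrn_lgt0 //; apply.
by move=> /(congr1 fst) /= r_eq0; rewrite r_eq0 eqxx in r0.
Qed.

Lemma S_monotone_sup_graph_mx (H : set ('cV[R]_m * 'cV[R]_m)) :
  S_monotone H -> graphA `<=` H -> H = graphA.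
Proof.
move=> monH AH; apply/seteqP; split=> // -[u v] Huv; rewrite /graph_of /=.
apply/eqP; rewrite -subr_eq0 -dotv_eq0 eq_le dotv_ge0 andbT.
set e := v - A *m u.
apply: (@ler0_of_le_pmul _ _ (dotv e (A *m e))) => t t_gt0.
have Ht : H (u + t *: e, A *m (u + t *: e)) by apply: AH.
have := monH _ _ Huv Ht; rewrite stdS_diag /= pmulrn_lge0 //.
have -> : v - A *m (u + t *: e) = e - t *: (A *m e).
  by rewrite mulmxDr -scalemxAr opprD addrA.
rewrite opprD addrA subrr add0r dotvNl dotvZl dotvBr !dotvZr oppr_ge0.
by rewrite pmulr_rle0 // subr_le0.
Qed.

Lemma graph_mx_maximal_S_monotone : posdef A -> maximal_S_monotone graphA.
Proof.
move=> posA; split; last exact: S_monotone_sup_graph_mx.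
exact/strictly_S_monotoneW/graph_mx_strictly_S_monotone.
Qed.

End GraphOfMatrix.

Lemma subspace_graph_mx (R : realType) (m : nat) (G : set ('cV[R]_m * 'cV[R]_m)) :
  subspace G -> (forall r, exists s, G (r, s)) -> (forall s, G (0, s) -> s = 0) ->
  exists A : 'M[R]_m, G = graph_of (fun u => A *m u).
Proof.
move=> subG domG fib0; have [G0 [GD GZ]] := subG.
have [f Gf] := choice (fun j : 'I_m => domG (delta_mx j 0)).
pose A := \matrix_(i, j) f j i 0.
have GA r : G (r, A *m r).
  rewrite mulmx_sum_col {1}(col_sum_delta r).
  apply: (big_ind2 (fun u v => G (u, v))) => [|x1 x2 y1 y2|j _]; first exact: G0.
    exact: GD.
  have -> : col j A = f j by apply/matrixP => i k; rewrite (ord1 k) !mxE.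
  exact: GZ _ _ (Gf j).
exists A; apply/seteqP; split=> -[r s]; rewrite /graph_of /=; last by move=> ->.
move=> Gs; apply/eqP; rewrite -subr_eq0; apply/eqP/fib0.
by rewrite -[X in (X, _)](subrr r); apply: subspaceB subG Gs (GA r).
Qed.

Section MaximalStrictlyMonotoneSubspace.
Variables (R : realType) (m : nat) (G : set ('cV[R]_m * 'cV[R]_m)).
Hypotheses (subG : subspace G) (maxG : maximal_S_monotone G)
  (strG : strictly_S_monotone G).

Lemma fiber0_eq0 s : G (0, s) -> s = 0.
Proof.
move=> Gs; apply: contrapT => s_neq0.
have := strG Gs subG.1 (fun e => s_neq0 (congr1 snd e)).
by rewrite stdS_diag /= subr0 dotv0l mul0rn ltxx.
Qed.

Lemma domain_orthogonal0 w : (forall r s, G (r, s) -> dotv r w = 0) -> w = 0.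
Proof.
move=> orth; have [monG maxlG] := maxG.
have mon_w x : G x -> 0 <= stdS (x - (0, w)) (x - (0, w)).
  case: x => r s Gx; have := monG _ _ Gx subG.1.
  by rewrite !stdS_diag /= !subr0 dotvBr (orth _ _ Gx) subr0.
have monGw : S_monotone (G `|` [set (0, w)]).
  move=> x y [Gx|->] [Gy|->]; first exact: monG.
  - exact: mon_w.
  - by rewrite -opprB stdSN; apply: mon_w.
  - by rewrite subrr stdS_diag dotv0l.
apply: fiber0_eq0; rewrite -(maxlG _ monGw) => [|x Gx]; [by right|by left].
Qed.

Lemma domain_full r : exists s, G (r, s).
Proof.
have [G0 [GD GZ]] := subG.
apply: (@subspace_orthogonal0_full _ _ [set r | exists s, G (r, s)]).
- split; first by exists 0.
  split=> [x y [s Gs] [s' Gs']|a x [s Gs]].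
    by exists (s + s'); exact: GD _ _ Gs Gs'.
  by exists (a *: s); exact: GZ _ _ Gs.
- by move=> w orth; apply: domain_orthogonal0 => r' s Gs; apply: orth; exists s.
Qed.

End MaximalStrictlyMonotoneSubspace.

Theorem lemma13 (R : realType) (m : nat) (G : set ('cV[R]_m * 'cV[R]_m)) :
  closed G ->
  ((linear_subspace G /\ maximal_S_monotone G /\ strictly_S_monotone G) <->
   exists A : 'M[R]_m, posdef A /\ G = graph_of (fun u => A *m u)).
Proof.
move=> _; split.
- move=> [subG [maxG strG]].
  have [A GA] := subspace_graph_mx subG (domain_full subG maxG strG)
    (fiber0_eq0 subG strG).
  by exists A; split=> //; apply: posdef_graph_mx; rewrite -GA.
- move=> [A [posA ->]]; split; first exact: graph_mx_subspace.
  split; first exact: graph_mx_maximal_S_monotone.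
  exact: graph_mx_strictly_S_monotone.
Qed.
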